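(* Let $\hat Q^\pi=\sum_{i=1}^n b^\pi_iK(\cdot,\omega_0^{(i)})$ with $\mathbf b^\pi=[\mathbf K+\lambda n\mathrm I-\gamma\mathbf C]^{-1}\mathbf r$ be the kernel TD estimator, let $\mathcal D^\pi=\hat Q^\pi-Q^\pi$, and let $\varepsilon_i=r(\omega_0^{(i)})+\gamma Q^\pi(\omega_1^{(i)})-Q^\pi(\omega_0^{(i)})$ be the Bellman residuals. Then $$\frac1n\sum_{i=1}^n\Big(\mathcal D^\pi(\omega_0^{(i)})^2-\gamma\,\mathcal D^\pi(\omega_0^{(i)})\mathcal D^\pi(\omega_1^{(i)})\Big)=\frac1n\sum_{i=1}^n\varepsilon_i\,\mathcal D^\pi(\omega_0^{(i)})-\lambda\langle\mathcal D^\pi,\hat Q^\pi\rangle_{\mathcal H}.$$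
   Context: Markov decision process $(\mathcal S,\mathcal A,P,r,\gamma)$ with compact convex $\mathcal S\subset\mathbb R^{d_s}$, $\mathcal A\subset\mathbb R^{d_a}$, transition density $P(\cdot\mid s,a)$, reward $r$, discount $\gamma\in[0,1]$; $\pi$ a fixed policy; $Q^\pi(s,a)=\mathbb E[\sum_{t\ge0}\gamma^tr(s_t,a_t)\mid s_0=s,a_0=a]$ along $a_t\sim\pi(\cdot\mid s_t)$, $s_{t+1}\sim P(\cdot\mid s_t,a_t)$; it satisfies $Q^\pi(s,a)=r(s,a)+\gamma\mathbb E_{s'\sim P(\cdot\mid s,a),a'\sim\pi(\cdot\mid s')}Q^\pi(s',a')$. $K$ is a symmetric positive definite kernel on $\mathcal S\times\mathcal A$ with $\max_\omega K(\omega,\omega)<\infty$, $\mathcal H$ its RKHS; standing assumption: $Q^\pi\in\mathcal H$ and $r\in\mathcal H$. $\lambda>0$. Data: i.i.d. for $i=1,\dots,n$: $s_0^{(i)}\sim\mu_0$, $a_0^{(i)}\sim\pi(\cdot\mid s_0^{(i)})$, $s_1^{(i)}\sim P(\cdot\mid s_0^{(i)},a_0^{(i)})$, $a_1^{(i)}\sim\pi(\cdot\mid s_1^{(i)})$; $\omega_j^{(i)}=(s_j^{(i)},a_j^{(i)})$. Matrices: $\mathbf K_{i,j}=K(\omega_0^{(i)},\omega_0^{(j)})$, $\mathbf C_{i,j}=K(\omega_1^{(i)},\omega_0^{(j)})$, $\mathbf r_i=r(\omega_0^{(i)})$ (with $\mathbf K+\lambda n\mathrm I-\gamma\mathbf C$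 invertible). *)

From HB Require Import structures.
From mathcomp Require Import all_boot all_order all_algebra.
From mathcomp Require Import reals.
Set Implicit Arguments. Unset Strict Implicit. Unset Printing Implicit Defensive.
Import Order.TTheory GRing.Theory Num.Theory.
Local Open Scope ring_scope.

Definition spd_kernel (R : realType) (Omega : Type) (K : Omega -> Omega -> R) : Prop :=
  [/\ (forall x y, K x y = K y x),
      (forall (m : nat) (c : 'I_m -> R) (x : 'I_m -> Omega),
          0 <= \sum_(i < m) \sum_(j < m) c i * c j * K (x i) (x j))
    & exists M : R, forall x, K x x <= M].

(* (H, ip, ev, ksec) is the reproducing kernel Hilbert space of K on Omega:
   H is a real vector space, [ip] an inner product on it, H is complete for the
   induced norm, [ev f] is the function on Omega represented by f (a linear,
   injective map, so H is a space of functions), [ksec w] is the kernel section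
   K(., w), and the reproducing property <f, K(., w)> = f(w) holds. *)
Record is_rkhs (R : realType) (Omega : Type) (K : Omega -> Omega -> R)
  (H : lmodType R) (ip : H -> H -> R) (ev : H -> Omega -> R) (ksec : Omega -> H)
  : Prop := {
  ip_linear : forall (a : R) (f g h : H), ip (a *: f + g) h = a * ip f h + ip g h;
  ip_sym : forall f g, ip f g = ip g f;
  ip_ge0 : forall f, 0 <= ip f f;
  ip_eq0 : forall f, ip f f = 0 -> f = 0;
  ip_complete : forall u : nat -> H,
      (forall e : R, 0 < e -> exists N, forall p q, (N <= p)%N -> (N <= q)%N ->
           ip (u p - u q) (u p - u q) < e) ->
      exists f : H, forall e : R, 0 < e -> exists N, forall p, (N <= p)%N ->
           ip (u p - f) (u p - f) < e;
  ev_linear : forall (a : R) (f g : H) w, ev (a *: f + g) w = a * ev f w + ev g w;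
  ev_inj : forall f g, (forall w, ev f w = ev g w) -> f = g;
  ksec_ev : forall w w', ev (ksec w) w' = K w' w;
  reproducing : forall f w, ip f (ksec w) = ev f w }.

Definition gramK (R : realType) (Omega : Type) (K : Omega -> Omega -> R)
  (n : nat) (w0 : 'I_n -> Omega) : 'M[R]_n :=
  \matrix_(i, j) K (w0 i) (w0 j).

Definition crossC (R : realType) (Omega : Type) (K : Omega -> Omega -> R)
  (n : nat) (w0 w1 : 'I_n -> Omega) : 'M[R]_n :=
  \matrix_(i, j) K (w1 i) (w0 j).

Definition td_coef (R : realType) (Omega : Type) (K : Omega -> Omega -> R)
  (r : Omega -> R) (gamma lambda : R) (n : nat) (w0 w1 : 'I_n -> Omega) : 'cV[R]_n :=
  invmx (gramK K w0 + (lambda * n%:R)%:M - gamma *: crossC K w0 w1)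
  *m \col_i r (w0 i).

Definition td_estimator (R : realType) (Omega : Type) (K : Omega -> Omega -> R)
  (H : lmodType R) (ksec : Omega -> H)
  (r : Omega -> R) (gamma lambda : R) (n : nat) (w0 w1 : 'I_n -> Omega) : H :=
  \sum_(i < n) (td_coef K r gamma lambda w0 w1 i 0) *: ksec (w0 i).

(** The TD estimator solves the regularized empirical Bellman system
    [Qhat(w0_i) + lambda n b_i - gamma Qhat(w1_i) = r(w0_i)].  Substituting
    this expression for [r(w0_i)] into the Bellman residual [eps_i] turns each
    summand of the left-hand side into [eps_i D(w0_i) - lambda n b_i D(w0_i)],
    and by the reproducing property [sum_i b_i D(w0_i)] is [<D, Qhat>]. *)
From HB Require Import structures.
From mathcomp Require Import all_boot all_order all_algebra.
From mathcomp Require Import reals.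
From mathcomp Require Import ring.
Import Order.TTheory GRing.Theory Num.Theory.
Local Open Scope ring_scope.

Section LinearFunctional.
Context {R : pzRingType} {U : lmodType R} {f : U -> R}.
Hypothesis f_linear : forall a x y, f (a *: x + y) = a * f x + f y.

Let fL : {linear U -> R^o} :=
  HB.pack f (GRing.isLinear.Build R U R^o *:%R f f_linear).

Lemma linear_functionalB x y : f (x - y) = f x - f y.
Proof. exact: (linearB fL). Qed.

Lemma linear_functionalZ a x : f (a *: x) = a * f x.
Proof. exact: (linearZ_LR fL). Qed.

Lemma linear_functional_sum I (s : seq I) (P : pred I) (F : I -> U) :
  f (\sum_(i <- s | P i) F i) = \sum_(i <- s | P i) f (F i).
Proof. exact: (linear_sum fL). Qed.

End LinearFunctional.

Section Rkhs.
Context {R : realType} {Omega : Type} {K : Omega -> Omega -> R}.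
Context {H : lmodType R} {ip : H -> H -> R} {ev : H -> Omega -> R}.
Context {ksec : Omega -> H}.
Hypothesis rkhs : is_rkhs K ip ev ksec.

Lemma ev_linear_at w a f g : ev (a *: f + g) w = a * ev f w + ev g w.
Proof. exact: (ev_linear rkhs). Qed.

Lemma ip_linear_left h a f g : ip (a *: f + g) h = a * ip f h + ip g h.
Proof. exact: (ip_linear rkhs). Qed.

Lemma ev_kernel_expansion n (c : 'I_n -> R) (x : 'I_n -> Omega) w :
  ev (\sum_(i < n) c i *: ksec (x i)) w = \sum_(i < n) c i * K w (x i).
Proof.
rewrite (linear_functional_sum (ev_linear_at w)); apply: eq_bigr => i _.
by rewrite (linear_functionalZ (ev_linear_at w)) (ksec_ev rkhs).
Qed.

Lemma ip_kernel_expansion n (c : 'I_n -> R) (x : 'I_n -> Omega) f :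
  ip f (\sum_(i < n) c i *: ksec (x i)) = \sum_(i < n) c i * ev f (x i).
Proof.
rewrite (ip_sym rkhs) (linear_functional_sum (ip_linear_left f)).
apply: eq_bigr => i _.
by rewrite (linear_functionalZ (ip_linear_left f)) (ip_sym rkhs) (reproducing rkhs).
Qed.

Lemma td_estimator_bellman_system {r : Omega -> R} {gamma lambda : R} {n}
    {w0 w1 : 'I_n -> Omega} (i : 'I_n) :
  gramK K w0 + (lambda * n%:R)%:M - gamma *: crossC K w0 w1 \in unitmx ->
  let Qhat := td_estimator K ksec r gamma lambda w0 w1 in
  ev Qhat (w0 i) + lambda * n%:R * td_coef K r gamma lambda w0 w1 i 0
    - gamma * ev Qhat (w1 i) = r (w0 i).
Proof.
move=> A_unit Qhat; set b := td_coef K r gamma lambda w0 w1.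
have /(congr1 (fun M : 'cV[R]_n => M i 0)) :
    (gramK K w0 + (lambda * n%:R)%:M - gamma *: crossC K w0 w1) *m b
    = \col_j r (w0 j) by rewrite /b /td_coef mulKVmx.
rewrite mulmxBl mulmxDl mul_scalar_mx -scalemxAl !mxE => <-.
rewrite !ev_kernel_expansion; congr (_ + _ - _ * _);
  by apply: eq_bigr => j _; rewrite !mxE mulrC.
Qed.

End Rkhs.

Theorem proposition2 (R : realType) (Omega : Type) (K : Omega -> Omega -> R)
  (H : lmodType R) (ip : H -> H -> R) (ev : H -> Omega -> R) (ksec : Omega -> H)
  (r : Omega -> R) (Q : H) (gamma lambda : R) (n : nat)
  (w0 w1 : 'I_n -> Omega) :
  spd_kernel K ->
  is_rkhs K ip ev ksec ->
  (exists rH : H, forall w, ev rH w = r w) ->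
  0 <= gamma <= 1 ->
  0 < lambda ->
  (0 < n)%N ->
  gramK K w0 + (lambda * n%:R)%:M - gamma *: crossC K w0 w1 \in unitmx ->
  let Qhat := td_estimator K ksec r gamma lambda w0 w1 in
  let D := Qhat - Q in
  let eps := fun i : 'I_n => r (w0 i) + gamma * ev Q (w1 i) - ev Q (w0 i) in
  (n%:R)^-1 * \sum_(i < n) (ev D (w0 i) ^+ 2 - gamma * ev D (w0 i) * ev D (w1 i))
  = (n%:R)^-1 * \sum_(i < n) eps i * ev D (w0 i) - lambda * ip D Qhat.
Proof.
move=> _ rkhs _ _ _ n_gt0 A_unit Qhat D eps.
set b := td_coef K r gamma lambda w0 w1.
have evD w : ev D w = ev Qhat w - ev Q w.
  exact: (linear_functionalB (ev_linear_at rkhs w)).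
have ipD : ip D Qhat = \sum_(i < n) b i 0 * ev D (w0 i).
  exact: (ip_kernel_expansion rkhs).
have summand i : ev D (w0 i) ^+ 2 - gamma * ev D (w0 i) * ev D (w1 i)
    = eps i * ev D (w0 i) - lambda * n%:R * (b i 0 * ev D (w0 i)).
  by rewrite /eps -(td_estimator_bellman_system rkhs (r := r) i A_unit) !evD; ring.
rewrite (eq_bigr _ (fun i _ => summand i)) sumrB -mulr_sumr -ipD mulrBr.
congr (_ - _); rewrite mulrA mulrCA mulVf ?mulr1 //.
by rewrite pnatr_eq0 -lt0n.
Qed.
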